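(* Let $\varphi(x)$ be a first-order formula over a finite modal signature, of quantifier rank $q$, and suppose $\varphi$ is invariant under graded bisimulation $\sim_{\mathrm{C}}$ over the class of all pointed Kripke structures (respectively, over the class of all finite pointed Kripke structures) of this signature. Then, with $\ell=2^q-1$, there is $c\in\mathbb{N}$ such that $\varphi$ is invariant under $\sim_{\mathrm{C}}^{c,\ell}$ over the class of all pointed Kripke structures (respectively, over the class of all finite pointed Kripke structures): whenever $\mathcal{M},w\sim_{\mathrm{C}}^{c,\ell}\mathcal{M}',w'$ (both finite in the respective case), $\mathcal{M}\models\varphi[w]\iff\mathcal{M}'\models\varphi[w']$.
   Context: A finite modal signature consists of a finite set $I$ of agents and a finite set $J$ of basic propositions. A Kripke structure is $\mathcal{M}=(W,(E_i)_{i\in I},(P_j)_{j\in J})$ with $W\neq\emptyset$, $E_i\subseteq W\times W$, $P_j\subseteq W$, viewed as a relational structure; it is finite if $W$ is finite. A pointed Kripke structure $\mathcal{M},w$ has a distinguished world $w$, and $\varphi(x)$ is evaluated by assigning $w$ to $x$. $E_i[u]=\{v:(u,v)\in E_i\}$. A graded bisimulation between $\mathcal{M}$ and $\mathcal{M}'=(W',(E'_i),(P'_j))$ is a non-empty relation $Z\subseteq W\times W'$ such that for all $(u,u')\in Z$: (atom equivalence) $u\in P_j\iff u'\in P'_j$ for all $j$; (graded forth) for every $i$ and $k\ge1$ and pairwise distinct $v_1,\dots,v_k\in E_i[u]$ there are pairwise distinct $v'_1,\dots,v'_k\in E'_i[u']$ with $(v_m,v'_m)\in Z$ for all $m$; (graded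 back) symmetrically. $\mathcal{M},w\sim_{\mathrm{C}}\mathcal{M}',w'$ if such $Z$ exists with $(w,w')\in Z$. The $c$-graded $\ell$-round game on $\mathcal{M},\mathcal{M}'$ from $(w,w')$: positions are pairs $(u,u')\in W\times W'$. In each round from $(u,u')$, player I chooses an agent $i$ and a non-empty subset $s$ of $E_i[u]$ or of $E_i'[u']$ of size at most $c$; player II must respond with a subset $s'$ of the same size of the corresponding set on the other side; then I picks a world in $s'$ and II answers by picking a world in $s$; the pair of these two worlds is the new position. A player unable to move loses; II also loses as soon as a position $(v,v')$ (including the initial one) violates atom equivalence ($v\in P_j\not\Leftrightarrow v'\in P'_j$ for some $j$). $\mathcal{M},w\sim_{\mathrm{C}}^{c,\ell}\mathcal{M}',w'$ means II has a winning strategy for the $\ell$ rounds of this game from $(w,w')$. *)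

From Stdlib Require Import List Arith.
Import ListNotations.

Set Implicit Arguments.

Definition finite_type (T : Type) : Prop := exists l : list T, forall x : T, In x l.

Record kripke (I J : Type) := Kripke {
  world : Type;
  world_inhabited : inhabited world;
  edge : I -> world -> world -> Prop;
  prop : J -> world -> Prop
}.
Arguments world {I J}.
Arguments edge {I J}.
Arguments prop {I J}.

Definition finite_kripke {I J} (M : kripke I J) : Prop := finite_type (world M).

Inductive fo (I J : Type) : Type :=
| FEq   : nat -> nat -> fo I J
| FRel  : I -> nat -> nat -> fo I J
| FPred : J -> nat -> fo I J
| FNot  : fo I J -> fo I J
| FAnd  : fo I J -> fo I J -> fo I J
| FOr   : fo I J -> fo I J -> fo I J
| FEx   : nat -> fo I J -> fo I J
| FAll  : nat -> fo I J -> fo I J.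
Arguments FEq {I J}. Arguments FRel {I J}. Arguments FPred {I J}.
Arguments FNot {I J}. Arguments FAnd {I J}. Arguments FOr {I J}.
Arguments FEx {I J}. Arguments FAll {I J}.

Fixpoint qrank {I J} (f : fo I J) : nat :=
  match f with
  | FEq _ _ | FRel _ _ _ | FPred _ _ => 0
  | FNot g => qrank g
  | FAnd g h | FOr g h => Nat.max (qrank g) (qrank h)
  | FEx _ g | FAll _ g => S (qrank g)
  end.

Fixpoint fv_in {I J} (ok : nat -> Prop) (f : fo I J) : Prop :=
  match f with
  | FEq x y => ok x /\ ok y
  | FRel _ x y => ok x /\ ok y
  | FPred _ x => ok x
  | FNot g => fv_in ok g
  | FAnd g h | FOr g h => fv_in ok g /\ fv_in ok h
  | FEx x g | FAll x g => fv_in (fun y => y = x \/ ok y) g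
  end.

(** phi(x): the only free variable is x, which we take to be variable 0. *)
Definition one_free_var {I J} (f : fo I J) : Prop := fv_in (fun y => y = 0) f.

Definition upd {W : Type} (g : nat -> W) (x : nat) (v : W) : nat -> W :=
  fun y => if Nat.eqb y x then v else g y.

Fixpoint sat {I J} (M : kripke I J) (g : nat -> world M) (f : fo I J) : Prop :=
  match f with
  | FEq x y => g x = g y
  | FRel i x y => edge M i (g x) (g y)
  | FPred j x => prop M j (g x)
  | FNot h => ~ sat M g h
  | FAnd h k => sat M g h /\ sat M g k
  | FOr h k => sat M g h \/ sat M g k
  | FEx x h => exists v : world M, sat M (upd g x v) h
  | FAll x h => forall v : world M, sat M (upd g x v) h
  end.

Definition holds_at {I J} (M : kripke I J) (w : world M) (f : fo I J) : Prop :=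
  sat M (fun _ => w) f.

Definition atom_eq {I J} (M M' : kripke I J) (u : world M) (u' : world M') : Prop :=
  forall j : J, prop M j u <-> prop M' j u'.

(** A finite set of k pairwise distinct successors, as a duplicate-free list. *)
Definition succ_set {I J} (M : kripke I J) (i : I) (u : world M) (s : list (world M)) : Prop :=
  NoDup s /\ forall v, In v s -> edge M i u v.

Definition graded_bisim {I J} (M M' : kripke I J) (Z : world M -> world M' -> Prop) : Prop :=
  (exists u u', Z u u') /\
  forall u u', Z u u' ->
    atom_eq M M' u u' /\
    (forall (i : I) (vs : list (world M)), 1 <= length vs -> succ_set M i u vs ->
       exists vs', succ_set M' i u' vs' /\ Forall2 Z vs vs') /\
    (forall (i : I) (vs' : list (world M')), 1 <= length vs' -> succ_set M' i u' vs' ->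
       exists vs, succ_set M i u vs /\ Forall2 Z vs vs').

Definition bisimilar {I J} (M : kripke I J) (w : world M) (M' : kripke I J) (w' : world M') : Prop :=
  exists Z, graded_bisim M M' Z /\ Z w w'.

(** [II_wins c l M M' u u']: player II has a winning strategy in the
    c-graded l-round game from position (u,u'). *)
Fixpoint II_wins {I J} (c l : nat) (M M' : kripke I J) (u : world M) (u' : world M') : Prop :=
  atom_eq M M' u u' /\
  match l with
  | 0 => True
  | S l' =>
      (* I chooses s in E_i[u]; II answers s' in E'_i[u']; I picks v' in s',
         II answers v in s. *)
      (forall (i : I) (s : list (world M)),
          1 <= length s -> length s <= c -> succ_set M i u s ->
          exists s' : list (world M'),
            succ_set M' i u' s' /\ length s' = length s /\
            forall v', In v' s' -> exists v, In v s /\ II_wins c l' M M' v v') /\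
      (* I chooses s in E'_i[u']; II answers s' in E_i[u]; I picks v in s',
         II answers v' in s. *)
      (forall (i : I) (s : list (world M')),
          1 <= length s -> length s <= c -> succ_set M' i u' s ->
          exists s' : list (world M),
            succ_set M i u s' /\ length s' = length s /\
            forall v, In v s' -> exists v', In v' s /\ II_wins c l' M M' v v')
  end.

Definition game_equiv {I J} (c l : nat) (M : kripke I J) (w : world M) (M' : kripke I J) (w' : world M') : Prop :=
  II_wins c l M M' w w'.

Definition invariant_bisim {I J} (K : kripke I J -> Prop) (f : fo I J) : Prop :=
  forall (M M' : kripke I J) (w : world M) (w' : world M'),
    K M -> K M' -> bisimilar M w M' w' -> (holds_at M w f <-> holds_at M' w' f).

Definition invariant_game {I J} (K : kripke I J -> Prop) (c l : nat) (f : fo I J) : Prop :=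
  forall (M M' : kripke I J) (w : world M) (w' : world M'),
    K M -> K M' -> game_equiv c l M w M' w' -> (holds_at M w f <-> holds_at M' w' f).

(** Unravel [M, w] and [M', w'] into trees down to depth [2^q - 1], continuing
    below that depth with the original structures, and let the arena consist of
    [q + 2] disjoint copies of the disjoint union of the two unravellings.  Both
    pointed structures are graded bisimilar to their roots in the arena, so by
    invariance it suffices that the two roots agree on all formulas of quantifier
    rank [q] there.  This is an Ehrenfeucht-Fraisse argument in which distances
    halve every round: with [k] rounds left, pebbles of different keys (copy and
    side) are more than [2^k] apart.  A pebble near a pebble in the left tree is
    answered by following the path to it through a growing set of pairs of tree
    paths at which II still wins the graded game; a new pair is found by letting
    I play at most [1 + q 2^q] siblings, among which II's answer contains a path
    not paired yet.  A pebble near any other pebble is copied rigidly, and a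
    pebble far from all is answered in an unoccupied copy. *)

From Stdlib Require Import List Arith Lia ClassicalEpsilon FunctionalExtensionality Eqdep_dec Bool.
Import ListNotations.

Set Implicit Arguments.

Definition classic_eq_dec {X : Type} (x y : X) : {x = y} + {x <> y} :=
  excluded_middle_informative (x = y).

Lemma NoDup_length_le_of_inj_rel {X Y : Type} (R : X -> Y -> Prop) (l : list X) (F : list Y) :
  NoDup l -> (forall x, In x l -> exists y, In y F /\ R x y) ->
  (forall x1 x2 y, In x1 l -> In x2 l -> R x1 y -> R x2 y -> x1 = x2) ->
  length l <= length F.
Proof.
  revert F; induction l as [|x l IH]; intros F Hnd Hex Hinj; simpl; [lia|].
  inversion Hnd; subst.
  destruct (Hex x (or_introl eq_refl)) as [y [Hy Rxy]].
  assert (Hlt := remove_length_lt classic_eq_dec F y Hy).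
  enough (length l <= length (remove classic_eq_dec y F)) by lia.
  apply IH; auto.
  - intros x' Hx'. destruct (Hex x' (or_intror Hx')) as [y' [Hy' R']].
    exists y'; split; auto. apply in_in_remove; auto.
    intros ->. assert (x' = x) by (apply (Hinj x' x y); simpl; auto). subst; contradiction.
  - intros; eapply Hinj; simpl; eauto.
Qed.

Lemma exists_fresh_below (l : list nat) n : length l < n -> exists m, m < n /\ ~ In m l.
Proof.
  intros Hl. apply NNPP; intro Hno.
  enough (n <= length l) by lia.
  rewrite <- (length_seq n 0) at 1.
  apply (NoDup_length_le_of_inj_rel eq); [apply seq_NoDup| |intros; subst; auto].
  intros x Hx. apply in_seq in Hx. exists x; split; auto.
  apply NNPP; intro Hn. apply Hno. exists x; split; [lia|auto].
Qed.

Lemma exists_nodup_image {X Y : Type} (R : X -> Y -> Prop) (l : list X) :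
  (forall x y1 y2, R x y1 -> R x y2 -> y1 = y2) ->
  exists F, NoDup F /\ length F <= length l /\
    forall y, In y F <-> exists x, In x l /\ R x y.
Proof.
  intros Hfun; induction l as [|x l [F [Hnd [Hlen HF]]]].
  { exists []; split; [constructor|split; [simpl; lia|]]. simpl; firstorder. }
  destruct (classic (exists y, R x y /\ ~ In y F)) as [[y [Rxy Hy]]|Hno].
  - exists (y :: F); simpl; split; [constructor; auto|split; [lia|]].
    intros y'; split.
    + intros [<-|Hy']; [eauto|]. apply HF in Hy' as [x' [? ?]]; eauto.
    + intros [x' [[<-|Hx'] Rx']]; [left; eapply Hfun; eauto|right; apply HF; eauto].
  - exists F; simpl; split; [auto|split; [lia|]].
    intros y'; rewrite HF; split; [intros [x' [? ?]]; eauto|].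
    intros [x' [[<-|Hx'] Rx']]; eauto.
    apply NNPP; intro Hn; apply Hno; exists y'; split; auto. rewrite HF; auto.
Qed.

Lemma Forall2_map_r {X Y : Type} (R : X -> Y -> Prop) (f : X -> Y) (l : list X) :
  (forall x, In x l -> R x (f x)) -> Forall2 R l (map f l).
Proof. induction l; simpl; intros; constructor; auto. Qed.

Lemma Forall2_map_l {X Y : Type} (R : X -> Y -> Prop) (f : Y -> X) (l : list Y) :
  (forall y, In y l -> R (f y) y) -> Forall2 R (map f l) l.
Proof. induction l; simpl; intros; constructor; auto. Qed.

Lemma Forall2_compose {X Y Z : Type} (R1 : X -> Y -> Prop) (R2 : Y -> Z -> Prop) l1 l2 l3 :
  Forall2 R1 l1 l2 -> Forall2 R2 l2 l3 ->
  Forall2 (fun x z => exists y, R1 x y /\ R2 y z) l1 l3.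
Proof.
  intros H; revert l3; induction H; intros l3 H'; inversion H'; subst; constructor; eauto.
Qed.

Lemma in_map_image {X Y : Type} (f : X -> Y) (l : list Y) :
  (forall y, In y l -> exists x, y = f x) -> exists l0, l = map f l0.
Proof.
  induction l as [|y l IH]; intros Hl; [exists []; auto|].
  destruct (Hl y (or_introl eq_refl)) as [x ->].
  destruct IH as [l0 ->]; [intros; apply Hl; simpl; auto|]. exists (x :: l0); auto.
Qed.

Section KripkeBasics.
Context {I J : Type}.

Lemma fv_in_mono (f : fo I J) : forall ok ok' : nat -> Prop,
  (forall y, ok y -> ok' y) -> fv_in ok f -> fv_in ok' f.
Proof.
  induction f; simpl; intros ok ok' Hs H; try firstorder.
  all: eapply IHf; [|exact H]; intros y [->|Hy]; auto.
Qed.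

Definition partial_iso_on (A B : kripke I J) (L : list nat)
    (g : nat -> world A) (g' : nat -> world B) : Prop :=
  (forall x y, In x L -> In y L ->
     (g x = g y <-> g' x = g' y) /\ forall i, edge A i (g x) (g y) <-> edge B i (g' x) (g' y)) /\
  (forall x, In x L -> atom_eq A B (g x) (g' x)).

Definition back_and_forth (A B : kripke I J)
    (R : nat -> list nat -> (nat -> world A) -> (nat -> world B) -> Prop) : Prop :=
  forall k L g g', R k L g g' -> partial_iso_on A B L g g' /\
    forall k', k = S k' ->
      (forall z a, exists b, R k' (z :: L) (upd g z a) (upd g' z b)) /\
      (forall z b, exists a, R k' (z :: L) (upd g z a) (upd g' z b)).

Lemma back_and_forth_sat_iff A B R : back_and_forth A B R ->
  forall (f : fo I J) k L g g', R k L g g' ->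
  fv_in (fun y => In y L) f -> qrank f <= k -> (sat A g f <-> sat B g' f).
Proof.
  intros HR f; induction f; intros k L g g' Hr Hfv Hq; simpl in *;
    destruct (HR _ _ _ _ Hr) as [[Hat Hpr] Hstep].
  - destruct Hfv; apply (Hat n n0); auto.
  - destruct Hfv; apply (Hat n n0); auto.
  - apply Hpr; auto.
  - rewrite (IHf k L g g'); tauto.
  - destruct Hfv; rewrite (IHf1 k L g g'), (IHf2 k L g g'); auto; try tauto; lia.
  - destruct Hfv; rewrite (IHf1 k L g g'), (IHf2 k L g g'); auto; try tauto; lia.
  - destruct k as [|k']; [lia|]. destruct (Hstep k' eq_refl) as [Hf Hb].
    assert (Hfv' : fv_in (fun y => In y (n :: L)) f).
    { eapply fv_in_mono; [|exact Hfv]. intros y [->|Hy]; simpl; auto. }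
    split; intros [v Hv].
    + destruct (Hf n v) as [b Hb']. exists b. eapply IHf; eauto; lia.
    + destruct (Hb n v) as [a Ha']. exists a. eapply IHf; eauto; lia.
  - destruct k as [|k']; [lia|]. destruct (Hstep k' eq_refl) as [Hf Hb].
    assert (Hfv' : fv_in (fun y => In y (n :: L)) f).
    { eapply fv_in_mono; [|exact Hfv]. intros y [->|Hy]; simpl; auto. }
    split; intros Hv v.
    + destruct (Hb n v) as [a Ha']. eapply IHf; eauto; lia.
    + destruct (Hf n v) as [b Hb']. eapply IHf; eauto; lia.
Qed.

Lemma II_wins_atom_eq {c l} {M M' : kripke I J} {u u'} :
  II_wins c l M M' u u' -> atom_eq M M' u u'.
Proof. destruct l; simpl; tauto. Qed.

Lemma atom_eq_sym (M M' : kripke I J) u u' : atom_eq M M' u u' -> atom_eq M' M u' u.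
Proof. intros H j; specialize (H j); tauto. Qed.

Lemma atom_eq_trans (M1 M2 M3 : kripke I J) u1 u2 u3 :
  atom_eq M1 M2 u1 u2 -> atom_eq M2 M3 u2 u3 -> atom_eq M1 M3 u1 u3.
Proof. intros H H' j; specialize (H j); specialize (H' j); tauto. Qed.

Lemma II_wins_sym c l : forall (M M' : kripke I J) u u',
  II_wins c l M M' u u' -> II_wins c l M' M u' u.
Proof.
  induction l; simpl; intros M M' u u' [Ha H]; split; auto using atom_eq_sym.
  destruct H as [Hf Hb]; split.
  - intros i s H1 H2 H3. destruct (Hb i s H1 H2 H3) as [s' [Hs1 [Hs2 Hs3]]].
    exists s'; split; [auto|split; [auto|]].
    intros v Hv; destruct (Hs3 v Hv) as [v' [? ?]]; eauto.
  - intros i s H1 H2 H3. destruct (Hf i s H1 H2 H3) as [s' [Hs1 [Hs2 Hs3]]].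
    exists s'; split; [auto|split; [auto|]].
    intros v Hv; destruct (Hs3 v Hv) as [v' [? ?]]; eauto.
Qed.

Lemma II_wins_trans c l : forall (M1 M2 M3 : kripke I J) u1 u2 u3,
  II_wins c l M1 M2 u1 u2 -> II_wins c l M2 M3 u2 u3 -> II_wins c l M1 M3 u1 u3.
Proof.
  induction l; simpl; intros M1 M2 M3 u1 u2 u3 [Ha H] [Ha' H'];
    split; eauto using atom_eq_trans.
  destruct H as [Hf Hb], H' as [Hf' Hb']; split.
  - intros i s H1 H2 H3. destruct (Hf i s H1 H2 H3) as [s2 [Hs1 [Hs2 Hs3]]].
    destruct (Hf' i s2 ltac:(lia) ltac:(lia) Hs1) as [s3 [Ht1 [Ht2 Ht3]]].
    exists s3; split; [auto|split; [lia|]]. intros v3 Hv3.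
    destruct (Ht3 v3 Hv3) as [v2 [Hv2 Hw2]]. destruct (Hs3 v2 Hv2) as [v1 [Hv1 Hw1]].
    exists v1; split; eauto.
  - intros i s H1 H2 H3. destruct (Hb' i s H1 H2 H3) as [s2 [Hs1 [Hs2 Hs3]]].
    destruct (Hb i s2 ltac:(lia) ltac:(lia) Hs1) as [s1 [Ht1 [Ht2 Ht3]]].
    exists s1; split; [auto|split; [lia|]]. intros v1 Hv1.
    destruct (Ht3 v1 Hv1) as [v2 [Hv2 Hw2]]. destruct (Hs3 v2 Hv2) as [v3 [Hv3 Hw3]].
    exists v3; split; eauto.
Qed.

Lemma bisimilar_trans (M1 M2 M3 : kripke I J) w1 w2 w3 :
  bisimilar M1 w1 M2 w2 -> bisimilar M2 w2 M3 w3 -> bisimilar M1 w1 M3 w3.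
Proof.
  intros [Z1 [[_ H1] Hw1]] [Z2 [[_ H2] Hw2]].
  exists (fun x z => exists y, Z1 x y /\ Z2 y z); split; [|eauto].
  split; [eauto|]. intros u u3 [u2 [Hz1 Hz2]].
  destruct (H1 _ _ Hz1) as [Ha1 [Hf1 Hb1]], (H2 _ _ Hz2) as [Ha2 [Hf2 Hb2]].
  split; [eauto using atom_eq_trans|split].
  - intros i vs Hl Hs. destruct (Hf1 i vs Hl Hs) as [vs2 [Hs2 F2]].
    pose proof (Forall2_length F2).
    destruct (Hf2 i vs2 ltac:(lia) Hs2) as [vs3 [Hs3 F3]].
    exists vs3; split; auto. eapply Forall2_compose; eauto.
  - intros i vs3 Hl Hs. destruct (Hb2 i vs3 Hl Hs) as [vs2 [Hs2 F2]].
    pose proof (Forall2_length F2).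
    destruct (Hb1 i vs2 ltac:(lia) Hs2) as [vs1 [Hs1 F1]].
    exists vs1; split; auto. eapply Forall2_compose; eauto.
Qed.

Lemma bisimilar_embedding (N N' : kripke I J) (f : world N -> world N') x :
  (forall x y, f x = f y -> x = y) ->
  (forall x, atom_eq N N' x (f x)) ->
  (forall i x y, edge N' i (f x) (f y) <-> edge N i x y) ->
  (forall i x y', edge N' i (f x) y' -> exists y, y' = f y) ->
  bisimilar N x N' (f x).
Proof.
  intros Hinj Hat Hedge Hclosed.
  exists (fun y s => s = f y); split; [|auto]. split; [exists x, (f x); auto|].
  intros u s ->; split; [auto|split].
  - intros i vs _ [Hnd Hs]. exists (map f vs); split; [split|].
    + apply NoDup_map_NoDup_ForallPairs; auto. intros a b _ _; apply Hinj.
    + intros v Hv. apply in_map_iff in Hv as [y [<- Hy]]. apply Hedge; auto.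
    + apply Forall2_map_r; auto.
  - intros i vs' _ [Hnd Hs].
    destruct (in_map_image f vs') as [vs ->]; [intros y' Hy'; eapply Hclosed, Hs, Hy'|].
    exists vs; split; [split|].
    + eapply NoDup_map_inv; eauto.
    + intros v Hv. apply Hedge, Hs, in_map; auto.
    + apply Forall2_map_r; auto.
Qed.

Definition adjacent (N : kripke I J) (x y : world N) : Prop :=
  exists i, edge N i x y \/ edge N i y x.

Inductive walk (N : kripke I J) : world N -> world N -> nat -> Prop :=
| walk_refl x : walk N x x 0
| walk_step x y z n : adjacent N x y -> walk N y z n -> walk N x z (S n).

Definition near (N : kripke I J) (n : nat) (x y : world N) : Prop :=
  exists m, m <= n /\ walk N x y m.

Lemma walk_app N x y z n m : walk N x y n -> walk N y z m -> walk N x z (n + m).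
Proof. induction 1; simpl; intros; auto. econstructor; eauto. Qed.

Lemma walk_sym N x y n : walk N x y n -> walk N y x n.
Proof.
  induction 1; [constructor|]. rewrite <- Nat.add_1_r. eapply walk_app; eauto.
  apply walk_step with x; [|constructor]. destruct H as [i [? | ?]]; exists i; auto.
Qed.

Lemma near_sym N n x y : near N n x y -> near N n y x.
Proof. intros [m [? ?]]; exists m; split; auto using walk_sym. Qed.

Lemma near_trans N n m x y z : near N n x y -> near N m y z -> near N (n + m) x z.
Proof. intros [a [? ?]] [b [? ?]]; exists (a + b); split; [lia|eapply walk_app; eauto]. Qed.

Lemma near_mono N n m x y : n <= m -> near N n x y -> near N m x y.
Proof. intros ? [a [? ?]]; exists a; split; auto; lia. Qed.

Lemma near_refl N n x : near N n x x.
Proof. exists 0; split; [lia|constructor]. Qed.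

Lemma near_edge N n i x y : 1 <= n -> edge N i x y -> near N n x y.
Proof. intros ? He; exists 1; split; auto. econstructor; [exists i; left; eauto|constructor]. Qed.

End KripkeBasics.

Section Matchings.
Context {I J : Type}.

Fixpoint is_path (M : kripke I J) (v : world M) (p : list (I * world M)) : Prop :=
  match p with [] => True | (i, u) :: r => edge M i v u /\ is_path M u r end.

Fixpoint path_end (M : kripke I J) (v : world M) (p : list (I * world M)) : world M :=
  match p with [] => v | (_, u) :: r => path_end M u r end.

Lemma is_path_snoc M v p i u :
  is_path M v (p ++ [(i, u)]) <-> is_path M v p /\ edge M i (path_end M v p) u.
Proof. revert v; induction p as [|[j x] p IH]; intros v; simpl; [tauto|]. rewrite IH; tauto. Qed.

Lemma path_end_snoc M v p i u : path_end M v (p ++ [(i, u)]) = u.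
Proof. revert v; induction p as [|[j x] p IH]; intros v; simpl; auto. Qed.

Record matching (c ell : nat) (M M' : kripke I J) (w : world M) (w' : world M')
    (H : list (list (I * world M) * list (I * world M'))) : Prop := {
  matching_root : In ([], []) H;
  matching_functional : forall p p1' p2', In (p, p1') H -> In (p, p2') H -> p1' = p2';
  matching_injective : forall p1 p2 p', In (p1, p') H -> In (p2, p') H -> p1 = p2;
  matching_prefix_l : forall p i u p', In (p ++ [(i, u)], p') H ->
    exists p0' u', p' = p0' ++ [(i, u')] /\ In (p, p0') H;
  matching_prefix_r : forall p p' i u', In (p, p' ++ [(i, u')]) H ->
    exists p0 u, p = p0 ++ [(i, u)] /\ In (p0, p') H;
  matching_length : forall p p', In (p, p') H -> length p = length p';
  matching_depth : forall p p', In (p, p') H -> length p <= ell;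
  matching_path_l : forall p p', In (p, p') H -> is_path M w p;
  matching_path_r : forall p p', In (p, p') H -> is_path M' w' p';
  matching_wins : forall p p', In (p, p') H ->
    II_wins c (ell - length p) M M' (path_end M w p) (path_end M' w' p')
}.

#[global] Arguments matching_functional {c ell M M' w w' H} _ {p p1' p2'}.
#[global] Arguments matching_injective {c ell M M' w w' H} _ {p1 p2 p'}.
#[global] Arguments matching_prefix_l {c ell M M' w w' H} _ {p i u p'}.
#[global] Arguments matching_prefix_r {c ell M M' w w' H} _ {p p' i u'}.
#[global] Arguments matching_length {c ell M M' w w' H} _ {p p'}.
#[global] Arguments matching_depth {c ell M M' w w' H} _ {p p'}.
#[global] Arguments matching_path_l {c ell M M' w w' H} _ {p p'}.
#[global] Arguments matching_path_r {c ell M M' w w' H} _ {p p'}.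
#[global] Arguments matching_wins {c ell M M' w w' H} _ {p p'}.

Definition swap_pair {X Y : Type} (pr : X * Y) : Y * X := (snd pr, fst pr).

Lemma in_map_swap_pair {X Y : Type} (a : X) (b : Y) H :
  In (b, a) (map swap_pair H) <-> In (a, b) H.
Proof.
  rewrite in_map_iff; split.
  - intros [[x y] [E Hin]]. inversion E; subst; auto.
  - intros Hin. exists (a, b); auto.
Qed.

Lemma matching_swap c ell M M' w w' H :
  matching c ell M M' w w' H -> matching c ell M' M w' w (map swap_pair H).
Proof.
  intros Hm; split; intros *; rewrite ?in_map_swap_pair.
  - apply (matching_root Hm).
  - intros ? ?; eapply (matching_injective Hm); eauto.
  - intros ? ?; eapply (matching_functional Hm); eauto.
  - intros Hin. destruct (matching_prefix_r Hm Hin) as [p0 [u0 [-> ?]]].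
    exists p0, u0; rewrite in_map_swap_pair; auto.
  - intros Hin. destruct (matching_prefix_l Hm Hin) as [p0 [u0 [-> ?]]].
    exists p0, u0; rewrite in_map_swap_pair; auto.
  - intros Hin; symmetry; apply (matching_length Hm Hin).
  - intros Hin; rewrite <- (matching_length Hm Hin); apply (matching_depth Hm Hin).
  - apply (matching_path_r Hm).
  - apply (matching_path_l Hm).
  - intros Hin; rewrite <- (matching_length Hm Hin); apply II_wins_sym, (matching_wins Hm Hin).
Qed.

Lemma matching_cons {c ell M M' w w' H p p' i u u'} :
  matching c ell M M' w w' H -> In (p, p') H -> length p < ell ->
  (forall x, ~ In (p ++ [(i, u)], x) H) -> (forall x, ~ In (x, p' ++ [(i, u')]) H) ->
  edge M i (path_end M w p) u -> edge M' i (path_end M' w' p') u' ->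
  II_wins c (ell - S (length p)) M M' u u' ->
  matching c ell M M' w w' ((p ++ [(i, u)], p' ++ [(i, u')]) :: H).
Proof.
  intros Hm Hin Hlt Hnl Hnr Hu Hu' Hw.
  assert (Hlen := matching_length Hm Hin).
  split; simpl.
  - right; apply (matching_root Hm).
  - intros a b1 b2 [E1|E1] [E2|E2];
      try (inversion E1; inversion E2; subst; congruence);
      [inversion E1; subst; exfalso; eapply Hnl; eauto
      |inversion E2; subst; exfalso; eapply Hnl; eauto
      |eapply (matching_functional Hm); eauto].
  - intros a1 a2 b [E1|E1] [E2|E2];
      try (inversion E1; inversion E2; subst; congruence);
      [inversion E1; subst; exfalso; eapply Hnr; eauto
      |inversion E2; subst; exfalso; eapply Hnr; eauto
      |eapply (matching_injective Hm); eauto].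
  - intros a j x b [E1|E1].
    + inversion E1 as [[E2 E3]]. apply app_inj_tail in E2 as [-> E]. inversion E; subst.
      exists p', u'; auto.
    + destruct (matching_prefix_l Hm E1) as [p0' [u0 [? ?]]]. exists p0', u0; auto.
  - intros a b j x [E1|E1].
    + inversion E1 as [[E2 E3]]. apply app_inj_tail in E3 as [-> E]. inversion E; subst.
      exists p, u; auto.
    + destruct (matching_prefix_r Hm E1) as [p0 [u0 [? ?]]]. exists p0, u0; auto.
  - intros a b [E|E]; [inversion E; subst; rewrite !length_app; simpl; lia|].
    apply (matching_length Hm E).
  - intros a b [E|E]; [inversion E; subst; rewrite length_app; simpl; lia|].
    apply (matching_depth Hm E).
  - intros a b [E|E]; [inversion E; subst|apply (matching_path_l Hm E)].
    apply is_path_snoc; split; auto; apply (matching_path_l Hm Hin).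
  - intros a b [E|E]; [inversion E; subst|apply (matching_path_r Hm E)].
    apply is_path_snoc; split; auto; apply (matching_path_r Hm Hin).
  - intros a b [E|E]; [inversion E; subst|apply (matching_wins Hm E)].
    rewrite !path_end_snoc, length_app; simpl. rewrite Nat.add_1_r; auto.
Qed.

(** Each already paired extension of [p'] by an answer in [s'] comes from a
    distinct child of [p] in [F]. *)
Lemma matching_unused_answer c ell M M' w w' H p p' i u n
    (F : list (world M)) (s' : list (world M')) :
  matching c ell M M' w w' H -> In (p, p') H -> ell - S (length p) = n ->
  NoDup s' -> length F < length s' ->
  (forall u2 p2', In (p ++ [(i, u2)], p2') H -> II_wins c n M M u2 u -> In u2 F) ->
  (forall v', In v' s' -> II_wins c n M M' u v') ->
  exists v', In v' s' /\ forall x, ~ In (x, p' ++ [(i, v')]) H.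
Proof.
  intros Hm Hin En Hnd Hlt HF Hs'.
  apply NNPP; intro Hno.
  enough (length s' <= length F) by lia.
  apply (NoDup_length_le_of_inj_rel (fun v' u2 => In (p ++ [(i, u2)], p' ++ [(i, v')]) H)); auto.
  - intros v' Hv'.
    assert (Hused : exists x, In (x, p' ++ [(i, v')]) H).
    { apply NNPP; intro Hx; apply Hno; exists v'; split; [auto|intros x Hx'; apply Hx; eauto]. }
    destruct Hused as [x Hx].
    destruct (matching_prefix_r Hm Hx) as [p0 [u2 [-> Hp0]]].
    rewrite (matching_injective Hm Hp0 Hin) in Hx.
    exists u2; split; auto. apply (HF _ _ Hx).
    pose proof (matching_wins Hm Hx) as Hw.
    rewrite length_app, !path_end_snoc, Nat.add_1_r, En in Hw.
    eapply II_wins_trans; [exact Hw|apply II_wins_sym, Hs'; auto].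
  - intros v1 v2 u2 _ _ R1 R2.
    pose proof (matching_functional Hm R1 R2) as E.
    apply app_inj_tail in E as [_ E]; inversion E; auto.
Qed.

Lemma matching_extend {c ell M M' w w' H p p' i u} :
  matching c ell M M' w w' H -> In (p, p') H -> length p < ell ->
  edge M i (path_end M w p) u -> length H < c ->
  exists H', matching c ell M M' w w' H' /\ incl H H' /\ length H' <= S (length H) /\
    exists p2', In (p ++ [(i, u)], p2') H'.
Proof.
  intros Hm Hin Hlt Hu Hc.
  destruct (classic (exists p2', In (p ++ [(i, u)], p2') H)) as [Hex|Hnew].
  { exists H; split; [auto|split; [apply incl_refl|split; [lia|auto]]]. }
  set (n := ell - S (length p)).
  assert (Hw := matching_wins Hm Hin).
  replace (ell - length p) with (S n) in Hw by (unfold n; lia).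
  destruct Hw as [_ [Hforth _]].
  destruct (exists_nodup_image
              (fun pr u2 => fst pr = p ++ [(i, u2)] /\ II_wins c n M M u2 u) H)
    as [F [HFnd [HFlen HF]]].
  { intros pr u1 u2 [E1 _] [E2 _]. rewrite E1 in E2.
    apply app_inj_tail in E2 as [_ E]; inversion E; auto. }
  assert (HuF : ~ In u F).
  { rewrite HF; intros [[x y] [Hx [E _]]]; simpl in E; subst; eauto. }
  assert (Hsucc : succ_set M i (path_end M w p) (u :: F)).
  { split; [constructor; auto|].
    intros v [<-|Hv]; auto. apply HF in Hv as [[x y] [Hx [E _]]]; simpl in E; subst.
    apply (is_path_snoc M w p i v), (matching_path_l Hm Hx). }
  destruct (Hforth i (u :: F) ltac:(simpl; lia) ltac:(simpl; lia) Hsucc)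
    as [s' [[Hnd' Hsucc'] [Hlen' Hans]]].
  assert (Hall : forall v', In v' s' -> II_wins c n M M' u v').
  { intros v' Hv'. destruct (Hans v' Hv') as [v [[<-|HvF] Hvv']]; auto.
    apply HF in HvF as [_ [_ [_ Hvu]]].
    eapply II_wins_trans; [apply II_wins_sym, Hvu|exact Hvv']. }
  destruct (@matching_unused_answer c ell M M' w w' H p p' i u n F s' Hm Hin eq_refl Hnd')
    as [v' [Hv' Hunused]]; [simpl in Hlen'; lia| |exact Hall|].
  { intros u2 p2' Hx Hu2. apply HF. exists (p ++ [(i, u2)], p2'); auto. }
  exists ((p ++ [(i, u)], p' ++ [(i, v')]) :: H).
  split; [|split; [intros x Hx; right; auto|split; [simpl; lia|eexists; left; eauto]]].
  apply matching_cons; auto. intros x Hx; apply Hnew; eauto.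
Qed.

End Matchings.

Lemma sig_bool_eq {X : Type} (P : X -> bool) (a b : {x | P x = true}) :
  proj1_sig a = proj1_sig b -> a = b.
Proof.
  destruct a as [a ha], b as [b hb]; simpl; intros ->. f_equal. apply UIP_dec, bool_dec.
Qed.

Definition sig_opt_with {X : Type} (P : X -> bool) (x : X) (b : bool) :
    P x = b -> option {x | P x = true} :=
  match b with true => fun h => Some (exist _ x h) | false => fun _ => None end.

Definition sig_opt {X : Type} (P : X -> bool) (x : X) : option {x | P x = true} :=
  @sig_opt_with X P x (P x) eq_refl.

Lemma sig_opt_with_spec {X : Type} (P : X -> bool) x b (e : P x = b) :
  P x = true -> exists y, sig_opt_with P x e = Some y /\ proj1_sig y = x.
Proof. destruct b; simpl; intros; [eexists; split; eauto|congruence]. Qed.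

Lemma sig_opt_spec {X : Type} (P : X -> bool) x :
  P x = true -> exists y, sig_opt P x = Some y /\ proj1_sig y = x.
Proof. apply sig_opt_with_spec. Qed.

Lemma sig_opt_val {X : Type} (P : X -> bool) (y : {x | P x = true}) :
  sig_opt P (proj1_sig y) = Some y.
Proof.
  destruct (sig_opt_spec P (proj1_sig y)) as [y' [-> E]]; [destruct y; auto|].
  f_equal; apply sig_bool_eq; auto.
Qed.

Lemma finite_sig {X : Type} (P : X -> bool) (l : list X) :
  (forall x, P x = true -> In x l) -> finite_type {x | P x = true}.
Proof.
  intros Hl. exists (flat_map (fun x => match sig_opt P x with Some y => [y] | None => [] end) l).
  intros y. apply in_flat_map. exists (proj1_sig y). split.
  - apply Hl. destruct y; auto.
  - rewrite sig_opt_val. left; auto.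
Qed.

Lemma finite_sum {A B : Type} : finite_type A -> finite_type B -> finite_type (A + B).
Proof.
  intros [la Ha] [lb Hb]. exists (map inl la ++ map inr lb).
  intros [a|b]; apply in_or_app; [left|right]; apply in_map; auto.
Qed.

Lemma finite_prod {A B : Type} : finite_type A -> finite_type B -> finite_type (A * B).
Proof. intros [la Ha] [lb Hb]. exists (list_prod la lb). intros [a b]. apply in_prod; auto. Qed.

Fixpoint lists_upto {X : Type} (l : list X) (n : nat) : list (list X) :=
  match n with
  | 0 => [[]]
  | S n => [] :: flat_map (fun x => map (cons x) (lists_upto l n)) l
  end.

Lemma in_lists_upto {X : Type} (l : list X) :
  (forall x, In x l) -> forall n p, length p <= n -> In p (lists_upto l n).
Proof.
  intros Hl n. induction n; intros p Hp; destruct p as [|x p]; simpl in *; auto; try lia.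
  right. apply in_flat_map. exists x; split; auto. apply in_map, IHn; lia.
Qed.

(** Nodes of the unravelling: paths of length at most [ell] from the root,
    below which the original worlds are attached unchanged. *)
Inductive unode (I X : Type) : Type :=
| UPath : list (I * X) -> unode I X
| UWorld : X -> unode I X.
Arguments UPath {I X}. Arguments UWorld {I X}.

Definition unode_ok {I X : Type} (ell : nat) (a : unode I X) : bool :=
  match a with UPath p => length p <=? ell | UWorld _ => true end.

Section Unravelling.
Context {I J : Type} (ell : nat) (M : kripke I J) (w : world M).

Definition unravel_world (s : unode I (world M)) : world M :=
  match s with UPath p => path_end M w p | UWorld v => v end.

Definition unravel_edge (i : I) (s t : unode I (world M)) : Prop :=
  match s, t with
  | UPath p, UPath p2 => exists u, p2 = p ++ [(i, u)] /\ edge M i (path_end M w p) u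
  | UPath p, UWorld u => length p = ell /\ edge M i (path_end M w p) u
  | UWorld u, UWorld u2 => edge M i u u2
  | UWorld _, UPath _ => False
  end.

Definition unravel : kripke I J :=
  @Kripke I J {s : unode I (world M) | unode_ok ell s = true}
    (inhabits (exist _ (UPath []) eq_refl))
    (fun i s t => unravel_edge i (proj1_sig s) (proj1_sig t))
    (fun j s => prop M j (unravel_world (proj1_sig s))).

Definition unravel_root : world unravel := exist _ (UPath []) eq_refl.

Definition to_unravel (s : unode I (world M)) : world unravel :=
  match sig_opt (unode_ok ell) s with Some y => y | None => unravel_root end.

Lemma to_unravel_val s : unode_ok ell s = true -> proj1_sig (to_unravel s) = s.
Proof.
  intros h. unfold to_unravel. destruct (sig_opt_spec (unode_ok ell) s h) as [y [-> E]]; auto.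
Qed.

Definition unravel_valid (s : unode I (world M)) : Prop :=
  match s with UPath p => is_path M w p | UWorld _ => True end.

Definition unravel_child (s : unode I (world M)) (i : I) (v : world M) : unode I (world M) :=
  match s with
  | UPath p => if length p <? ell then UPath (p ++ [(i, v)]) else UWorld v
  | UWorld _ => UWorld v
  end.

Lemma unravel_world_child s i v : unravel_world (unravel_child s i v) = v.
Proof.
  destruct s; simpl; auto. destruct (length l <? ell); simpl; auto using path_end_snoc.
Qed.

Lemma unravel_child_ok s i v : unode_ok ell (unravel_child s i v) = true.
Proof.
  destruct s as [p|]; simpl; auto. destruct (length p <? ell) eqn:E; simpl; auto.
  apply Nat.ltb_lt in E. apply Nat.leb_le. rewrite length_app; simpl; lia.
Qed.

Lemma unravel_edge_child s i v : unode_ok ell s = true ->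
  edge M i (unravel_world s) v -> unravel_edge i s (unravel_child s i v).
Proof.
  destruct s as [p|]; simpl; auto. intros Hok He.
  destruct (length p <? ell) eqn:E; simpl; eauto.
  apply Nat.ltb_ge in E. apply Nat.leb_le in Hok. split; auto; lia.
Qed.

Lemma unravel_valid_child s i v : unravel_valid s ->
  edge M i (unravel_world s) v -> unravel_valid (unravel_child s i v).
Proof.
  destruct s as [p|]; simpl; auto. intros Hp He.
  destruct (length p <? ell); simpl; auto. apply is_path_snoc; auto.
Qed.

Lemma unravel_edge_world i s t : unravel_valid s -> unravel_edge i s t ->
  edge M i (unravel_world s) (unravel_world t) /\ unravel_valid t.
Proof.
  destruct s as [p|u], t as [p2|u2]; simpl; try tauto.
  intros Hp [x [-> Hx]]. rewrite path_end_snoc, is_path_snoc; auto.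
Qed.

Lemma unravel_edge_inj i s t1 t2 :
  unode_ok ell t1 = true -> unode_ok ell t2 = true ->
  unravel_edge i s t1 -> unravel_edge i s t2 -> unravel_world t1 = unravel_world t2 -> t1 = t2.
Proof.
  intros Ht1 Ht2; destruct s as [p|u], t1 as [p1|u1], t2 as [p2|u2]; simpl in *; try tauto;
    try (intros; subst; auto; fail).
  - intros [x [-> _]] [y [-> _]]. rewrite !path_end_snoc. intros ->; auto.
  - intros [x [-> _]] [E _]. apply Nat.leb_le in Ht1. rewrite length_app in Ht1; simpl in Ht1; lia.
  - intros [E _] [x [-> _]]. apply Nat.leb_le in Ht2. rewrite length_app in Ht2; simpl in Ht2; lia.
Qed.

Lemma bisimilar_unravel : bisimilar M w unravel unravel_root.
Proof.
  exists (fun u s => unravel_valid (proj1_sig s) /\ unravel_world (proj1_sig s) = u).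
  split; [|simpl; auto]. split; [exists w, unravel_root; simpl; auto|].
  intros u [s Hs] [Hval <-]; simpl in *. split; [|split].
  - intro j; simpl; tauto.
  - intros i vs _ [Hnd Hsucc].
    exists (map (fun v => to_unravel (unravel_child s i v)) vs). split; [split|].
    + apply NoDup_map_NoDup_ForallPairs; auto. intros a b _ _ E.
      apply (f_equal (fun t => unravel_world (proj1_sig t))) in E.
      rewrite !to_unravel_val, !unravel_world_child in E by apply unravel_child_ok; auto.
    + intros v Hv. apply in_map_iff in Hv as [x [<- Hx]]. simpl.
      rewrite to_unravel_val by apply unravel_child_ok. apply unravel_edge_child; auto.
    + apply Forall2_map_r. intros x Hx.
      rewrite to_unravel_val, unravel_world_child by apply unravel_child_ok.
      split; auto. apply unravel_valid_child; auto.
  - intros i vs' _ [Hnd Hsucc].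
    exists (map (fun t => unravel_world (proj1_sig t)) vs'). split; [split|].
    + apply NoDup_map_NoDup_ForallPairs; auto. intros [a ha] [b hb] Ha Hb E.
      apply sig_bool_eq; simpl in *.
      eapply unravel_edge_inj; eauto; [apply (Hsucc _ Ha)|apply (Hsucc _ Hb)].
    + intros v Hv. apply in_map_iff in Hv as [t [<- Ht]].
      apply (unravel_edge_world _ _ _ Hval (Hsucc _ Ht)).
    + apply Forall2_map_l. intros t Ht. split; auto.
      apply (unravel_edge_world _ _ _ Hval (Hsucc _ Ht)).
Qed.

Lemma unravel_finite : finite_type I -> finite_type (world M) -> finite_type (world unravel).
Proof.
  intros [lI HI] [lW HW]. simpl.
  apply (finite_sig (unode_ok ell) (map UPath (lists_upto (list_prod lI lW) ell) ++ map UWorld lW)).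
  intros [p|v] Hp; apply in_or_app; [left|right]; apply in_map; auto.
  apply in_lists_upto; [intros [i u]; apply in_prod; auto|]. apply Nat.leb_le; auto.
Qed.

End Unravelling.

Section SumsAndCopies.
Context {I J : Type}.

Definition kripke_sum (N N' : kripke I J) : kripke I J :=
  @Kripke I J (world N + world N') (let (x) := world_inhabited N in inhabits (inl x))
    (fun i a b => match a, b with
                  | inl x, inl y => edge N i x y
                  | inr x, inr y => edge N' i x y
                  | _, _ => False
                  end)
    (fun j a => match a with inl x => prop N j x | inr x => prop N' j x end).

Definition copy_index (K : nat) := {n : nat | (n <? S K) = true}.
Definition copy0 (K : nat) : copy_index K := exist _ 0 eq_refl.

Definition kripke_copies (K : nat) (N : kripke I J) : kripke I J :=
  @Kripke I J (copy_index K * world N) (let (x) := world_inhabited N in inhabits (copy0 K, x))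
    (fun i a b => fst a = fst b /\ edge N i (snd a) (snd b))
    (fun j a => prop N j (snd a)).

Lemma bisimilar_inl N N' x : bisimilar N x (kripke_sum N N') (inl x).
Proof.
  apply (bisimilar_embedding (N' := kripke_sum N N') inl).
  - intros a b E; inversion E; auto.
  - intros a j; simpl; tauto.
  - intros i a b; simpl; tauto.
  - intros i a [y|y] E; [eauto|destruct E].
Qed.

Lemma bisimilar_inr N N' x : bisimilar N' x (kripke_sum N N') (inr x).
Proof.
  apply (bisimilar_embedding (N' := kripke_sum N N') inr).
  - intros a b E; inversion E; auto.
  - intros a j; simpl; tauto.
  - intros i a b; simpl; tauto.
  - intros i a [y|y] E; [destruct E|eauto].
Qed.

Lemma bisimilar_copy K N (c : copy_index K) x : bisimilar N x (kripke_copies K N) (c, x).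
Proof.
  apply (bisimilar_embedding (N' := kripke_copies K N) (pair c)).
  - intros a b E; inversion E; auto.
  - intros a j; simpl; tauto.
  - intros i a b; simpl; tauto.
  - intros i a [d y] [E _]; simpl in E; subst; eauto.
Qed.

Lemma copy_index_finite K : finite_type (copy_index K).
Proof.
  apply (finite_sig _ (seq 0 (S K))). intros x Hx. apply in_seq. apply Nat.ltb_lt in Hx. lia.
Qed.

End SumsAndCopies.

Section Arena.
Context {I J : Type} (M M' : kripke I J) (w : world M) (w' : world M') (q : nat).

Definition depth := 2 ^ q - 1.
Definition grade := 1 + q * 2 ^ q.
Definition ncopies := S q.

Definition tree_sum := kripke_sum (unravel depth M w) (unravel depth M' w').
Definition arena := kripke_copies ncopies tree_sum.

Definition left_node (x : world arena) (p : list (I * world M)) : Prop :=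
  fst x = copy0 ncopies /\ exists a, snd x = inl a /\ proj1_sig a = UPath p.
Definition right_node (x : world arena) (p : list (I * world M')) : Prop :=
  fst x = copy0 ncopies /\ exists a, snd x = inr a /\ proj1_sig a = UPath p.
Definition right_at (p : list (I * world M')) : world arena :=
  (copy0 ncopies, inr (to_unravel depth M' w' (UPath p))).

Definition is_left (s : world tree_sum) : bool := match s with inl _ => true | inr _ => false end.

Definition component (x : world arena) : nat * bool := (proj1_sig (fst x), is_left (snd x)).

Definition pebble_key (g g' : nat -> world arena) (x : nat) : (nat * bool) * (nat * bool) :=
  (component (g x), component (g' x)).

Lemma right_node_at p : length p <= depth -> right_node (right_at p) p.
Proof.
  intros h. split; auto. eexists; split; [reflexivity|].
  apply to_unravel_val; simpl. apply Nat.leb_le; auto.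
Qed.

Lemma left_node_inj x y p : left_node x p -> left_node y p -> x = y.
Proof.
  destruct x as [cx sx], y as [cy sy]. intros [E1 [a [E2 E3]]] [F1 [b [F2 F3]]]; simpl in *; subst.
  do 2 f_equal. apply sig_bool_eq. congruence.
Qed.

Lemma right_node_inj x y p : right_node x p -> right_node y p -> x = y.
Proof.
  destruct x as [cx sx], y as [cy sy]. intros [E1 [a [E2 E3]]] [F1 [b [F2 F3]]]; simpl in *; subst.
  do 2 f_equal. apply sig_bool_eq. congruence.
Qed.

Lemma left_node_fun x p1 p2 : left_node x p1 -> left_node x p2 -> p1 = p2.
Proof.
  intros [_ [a [E1 E2]]] [_ [b [F1 F2]]]. rewrite E1 in F1. inversion F1; subst. congruence.
Qed.

Lemma right_node_fun x p1 p2 : right_node x p1 -> right_node x p2 -> p1 = p2.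
Proof.
  intros [_ [a [E1 E2]]] [_ [b [F1 F2]]]. rewrite E1 in F1. inversion F1; subst. congruence.
Qed.

Lemma left_node_component x p : left_node x p -> component x = (0, true).
Proof. intros [E [a [E2 _]]]. unfold component. rewrite E, E2. auto. Qed.

Lemma right_node_component x p : right_node x p -> component x = (0, false).
Proof. intros [E [a [E2 _]]]. unfold component. rewrite E, E2. auto. Qed.

Lemma edge_left_nodes i x y p p2 : left_node x p -> left_node y p2 ->
  edge arena i x y <-> exists u, p2 = p ++ [(i, u)] /\ edge M i (path_end M w p) u.
Proof.
  destruct x as [cx sx], y as [cy sy]. intros [E1 [a [E2 E3]]] [F1 [b [F2 F3]]]; simpl in *; subst.
  simpl. rewrite E3, F3. simpl. tauto.
Qed.

Lemma edge_right_nodes i x y p p2 : right_node x p -> right_node y p2 ->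
  edge arena i x y <-> exists u, p2 = p ++ [(i, u)] /\ edge M' i (path_end M' w' p) u.
Proof.
  destruct x as [cx sx], y as [cy sy]. intros [E1 [a [E2 E3]]] [F1 [b [F2 F3]]]; simpl in *; subst.
  simpl. rewrite E3, F3. simpl. tauto.
Qed.

Lemma edge_from_left_node i x y p : left_node x p -> edge arena i x y ->
  (exists u, left_node y (p ++ [(i, u)]) /\ edge M i (path_end M w p) u) \/ length p = depth.
Proof.
  destruct x as [cx sx], y as [cy [b|b]]; intros [E1 [a [E2 E3]]] [F1 F2]; simpl in *; subst;
    simpl in F2; [|tauto].
  rewrite E3 in F2. destruct (proj1_sig b) eqn:Eb; simpl in F2.
  - left. destruct F2 as [u [-> Hu]]. exists u; split; auto. split; auto. exists b; auto.
  - right; tauto.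
Qed.

Lemma edge_into_left_node i x y p : left_node x p -> edge arena i y x ->
  exists p0 u, p = p0 ++ [(i, u)] /\ left_node y p0.
Proof.
  destruct x as [cx sx], y as [cy [b|b]]; intros [E1 [a [E2 E3]]] [F1 F2]; simpl in *; subst;
    simpl in F2; [|tauto].
  rewrite E3 in F2. destruct (proj1_sig b) eqn:Eb; simpl in F2; [|tauto].
  destruct F2 as [u [-> Hu]]. exists l, u; split; auto. split; auto. exists b; auto.
Qed.

Lemma arena_walk_inv x y m : walk arena x y m -> fst x = fst y /\ walk tree_sum (snd x) (snd y) m.
Proof.
  induction 1; [split; auto; constructor|]. destruct IHwalk as [E W].
  destruct H as [i [[F1 F2]|[F1 F2]]]; split; try congruence; econstructor; eauto; exists i; auto.
Qed.

Lemma arena_walk_lift d s t m : walk tree_sum s t m -> walk arena (d, s) (d, t) m.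
Proof.
  induction 1; [constructor|]. econstructor; eauto.
  destruct H as [i [F|F]]; exists i; [left|right]; simpl; auto.
Qed.

Lemma tree_sum_walk_side s t m : walk tree_sum s t m -> is_left s = is_left t.
Proof.
  induction 1; auto. rewrite <- IHwalk.
  destruct H as [i [F|F]]; destruct x, y; simpl in F; tauto.
Qed.

Lemma near_component n x y : near arena n x y -> component x = component y.
Proof.
  intros [m [_ W]]. apply arena_walk_inv in W as [E W]. apply tree_sum_walk_side in W.
  unfold component; congruence.
Qed.

Lemma right_at_edge H p p' i u' :
  matching grade depth M M' w w' H -> In (p, p' ++ [(i, u')]) H ->
  edge arena i (right_at p') (right_at (p' ++ [(i, u')])).
Proof.
  intros Hm Hin.
  pose proof (matching_depth Hm Hin) as Hd. rewrite (matching_length Hm Hin), length_app in Hd.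
  simpl in Hd.
  assert (Hr : right_node (right_at p') p') by (apply right_node_at; lia).
  assert (Hr' : right_node (right_at (p' ++ [(i, u')])) (p' ++ [(i, u')]))
    by (apply right_node_at; rewrite length_app; simpl; lia).
  apply (edge_right_nodes i Hr Hr'). exists u'; split; auto.
  apply (is_path_snoc M' w' p' i u'), (matching_path_r Hm Hin).
Qed.

Lemma matching_follow_edge {x x1 p p' H} :
  adjacent arena x x1 -> left_node x p -> matching grade depth M M' w w' H -> In (p, p') H ->
  length p < depth -> length H < grade ->
  exists H' p1 p1', matching grade depth M M' w w' H' /\ incl H H' /\
    length H' <= S (length H) /\ left_node x1 p1 /\ In (p1, p1') H' /\
    length p1 <= S (length p) /\ adjacent arena (right_at p') (right_at p1').
Proof.
  intros [i [He|He]] Hx Hm Hin Hlt Hc.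
  - destruct (edge_from_left_node Hx He) as [[u [Hx1 Hu]]|Hl]; [|lia].
    destruct (matching_extend Hm Hin Hlt Hu Hc) as [H1 [Hm1 [Hinc [Hl1 [p2' Hin2]]]]].
    destruct (matching_prefix_l Hm1 Hin2) as [p0' [u' [-> Hin0]]].
    rewrite (matching_functional Hm1 Hin0 (Hinc _ Hin)) in Hin2.
    exists H1, (p ++ [(i, u)]), (p' ++ [(i, u')]).
    do 5 (split; [auto|]). split; [rewrite length_app; simpl; lia|].
    exists i; left; eapply right_at_edge; eauto.
  - destruct (edge_into_left_node Hx He) as [p0 [u [-> Hx1]]].
    destruct (matching_prefix_l Hm Hin) as [p0' [u' [-> Hin0]]].
    exists H, p0, p0'. split; [auto|split; [apply incl_refl|]].
    do 3 (split; [auto|]). split; [rewrite length_app; simpl; lia|].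
    exists i; right; eapply right_at_edge; eauto.
Qed.

Lemma matching_follow_walk {x y m} : walk arena x y m ->
  forall {p p' H}, left_node x p -> matching grade depth M M' w w' H -> In (p, p') H ->
  length p + m <= depth -> length H + m <= grade ->
  exists H' py py', matching grade depth M M' w w' H' /\ incl H H' /\
    length H' <= length H + m /\ left_node y py /\ In (py, py') H' /\
    length py <= length p + m /\ walk arena (right_at p') (right_at py') m.
Proof.
  induction 1 as [x|x x1 y n Hadj W IH]; intros p p' H Hx Hm Hin Hlen Hc.
  - exists H, p, p'. split; [auto|split; [apply incl_refl|]].
    split; [lia|]. do 2 (split; [auto|]). split; [lia|constructor].
  - destruct (matching_follow_edge Hadj Hx Hm Hin ltac:(lia) ltac:(lia))
      as [H1 [p1 [p1' [Hm1 [Hinc1 [Hl1 [Hx1 [Hin1 [Hp1 Hadj']]]]]]]]].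
    destruct (IH p1 p1' H1 Hx1 Hm1 Hin1 ltac:(lia) ltac:(lia))
      as [H' [py [py' [Hm' [Hinc' [Hl' [Hy [Hiny [Hpy Wy]]]]]]]]].
    exists H', py, py'. split; [auto|split; [eauto using incl_tran|]].
    split; [lia|]. do 2 (split; [auto|]). split; [lia|econstructor; eauto].
Qed.

Lemma pow2_pos k : 1 <= 2 ^ k.
Proof. apply (Nat.pow_le_mono_r 2 0 k); lia. Qed.

Definition tree_pebble H k (a b : world arena) : Prop :=
  exists p p', left_node a p /\ right_node b p' /\ In (p, p') H /\ length p + 2 ^ k <= 2 ^ q.

(** Tree pebbles lie at depth at most [2^q - 2^k], so following a walk of
    length [2^(k-1)] from one never leaves the trees; [H] has room for the at
    most [2^q] pairs added in each of the [k] remaining rounds. *)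
Record pebbling H k (L : list nat) (g g' : nat -> world arena) : Prop := {
  pebbling_vars : length L + k <= S q;
  pebbling_matching : matching grade depth M M' w w' H;
  pebbling_budget : length H + k * 2 ^ q <= grade;
  pebbling_placed : forall x, In x L -> tree_pebble H k (g x) (g' x) \/ snd (g x) = snd (g' x);
  pebbling_separated : forall x y, In x L -> In y L -> pebble_key g g' x <> pebble_key g g' y ->
    ~ near arena (2 ^ k) (g x) (g y) /\ ~ near arena (2 ^ k) (g' x) (g' y)
}.

#[global] Arguments pebbling_placed {H k L g g'} _ {x}.
#[global] Arguments pebbling_separated {H k L g g'} _ {x y}.

Definition pebbled k L g g' : Prop := exists H, pebbling H k L g g'.

Lemma tree_pebbles_iso H a a' p p' b b' r r' :
  matching grade depth M M' w w' H ->
  left_node a p -> right_node a' p' -> In (p, p') H ->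
  left_node b r -> right_node b' r' -> In (r, r') H ->
  (a = b <-> a' = b') /\ forall i, edge arena i a b <-> edge arena i a' b'.
Proof.
  intros Hm Ha Ha' Hin Hb Hb' Hin'. split.
  - split; intros ->.
    + rewrite (left_node_fun Ha Hb) in Hin.
      rewrite (matching_functional Hm Hin Hin') in Ha'. eapply right_node_inj; eauto.
    + rewrite (right_node_fun Ha' Hb') in Hin.
      rewrite (matching_injective Hm Hin Hin') in Ha. eapply left_node_inj; eauto.
  - intro i. rewrite (edge_left_nodes i Ha Hb), (edge_right_nodes i Ha' Hb'). split.
    + intros [u [-> Hu]]. destruct (matching_prefix_l Hm Hin') as [p0' [u' [-> Hin0]]].
      rewrite (matching_functional Hm Hin0 Hin) in Hin' |- *.
      exists u'; split; auto. apply (is_path_snoc M' w' p' i u'), (matching_path_r Hm Hin').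
    + intros [u' [-> Hu']]. destruct (matching_prefix_r Hm Hin') as [p0 [u [-> Hin0]]].
      rewrite (matching_injective Hm Hin0 Hin) in Hin' |- *.
      exists u; split; auto. apply (is_path_snoc M w p i u), (matching_path_l Hm Hin').
Qed.

Lemma copy_pebbles_iso (a a' b b' : world arena) :
  snd a = snd a' -> snd b = snd b' -> fst a = fst b -> fst a' = fst b' ->
  (a = b <-> a' = b') /\ forall i, edge arena i a b <-> edge arena i a' b'.
Proof.
  destruct a as [ca sa], a' as [ca' sa'], b as [cb sb], b' as [cb' sb']; simpl.
  intros -> -> -> ->. split; [split; intro E; inversion E; auto|intro i; simpl; tauto].
Qed.

Lemma pebbling_partial_iso H k L g g' : pebbling H k L g g' -> partial_iso_on arena arena L g g'.
Proof.
  intros P. pose proof (pebbling_matching P) as Hm. split.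
  - intros x y Hx Hy.
    destruct (classic (pebble_key g g' x = pebble_key g g' y)) as [Ek|Nk].
    2:{ destruct (pebbling_separated P Hx Hy Nk) as [N1 N2].
        pose proof (pow2_pos k).
        split; [split|intro i; split]; intro E; exfalso; [apply N1|apply N2|apply N1|apply N2];
          try (rewrite E; apply near_refl); eapply near_edge; eauto. }
    unfold pebble_key, component in Ek.
    destruct (pebbling_placed P Hx) as [[px [px' [Hax [Hbx [Hinx _]]]]]|Fx];
    destruct (pebbling_placed P Hy) as [[py [py' [Hay [Hby [Hiny _]]]]]|Fy].
    + eapply tree_pebbles_iso; eauto.
    + exfalso. destruct Hax as [_ [? [E1 _]]], Hbx as [_ [? [E2 _]]].
      rewrite E1, E2, Fy in Ek. inversion Ek. destruct (snd (g' y)); discriminate.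
    + exfalso. destruct Hay as [_ [? [E1 _]]], Hby as [_ [? [E2 _]]].
      rewrite E1, E2, Fx in Ek. inversion Ek. destruct (snd (g' x)); discriminate.
    + inversion Ek. apply copy_pebbles_iso; auto; apply sig_bool_eq; auto.
  - intros x Hx j. destruct (pebbling_placed P Hx) as [[px [px' [Hax [Hbx [Hinx _]]]]]|Fx].
    + pose proof (II_wins_atom_eq (matching_wins Hm Hinx) j) as Hj.
      destruct Hax as [_ [a [Ea Pa]]], Hbx as [_ [b [Eb Pb]]].
      change (prop tree_sum j (snd (g x)) <-> prop tree_sum j (snd (g' x))).
      rewrite Ea, Eb; simpl. rewrite Pa, Pb; exact Hj.
    + change (prop tree_sum j (snd (g x)) <-> prop tree_sum j (snd (g' x))). rewrite Fx; tauto.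
Qed.

Lemma tree_pebble_mono H H' k (a b : world arena) :
  incl H H' -> tree_pebble H (S k) a b -> tree_pebble H' k a b.
Proof.
  intros Hinc [p [p' [Ha [Hb [Hin Hl]]]]]. exists p, p'.
  split; [auto|split; [auto|split; [auto|]]]. simpl in Hl; lia.
Qed.

Definition far_from k L (g g' : nat -> world arena) (a b : world arena) : Prop :=
  forall x, In x L -> (component (g x), component (g' x)) <> (component a, component b) ->
    ~ near arena (2 ^ k) a (g x) /\ ~ near arena (2 ^ k) b (g' x).

Lemma separated_upd k L g g' z a b :
  (forall x y, In x L -> In y L -> pebble_key g g' x <> pebble_key g g' y ->
     ~ near arena (2 ^ S k) (g x) (g y) /\ ~ near arena (2 ^ S k) (g' x) (g' y)) ->
  far_from k L g g' a b ->
  forall x y, In x (z :: L) -> In y (z :: L) ->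
    pebble_key (upd g z a) (upd g' z b) x <> pebble_key (upd g z a) (upd g' z b) y ->
    ~ near arena (2 ^ k) (upd g z a x) (upd g z a y) /\
    ~ near arena (2 ^ k) (upd g' z b x) (upd g' z b y).
Proof.
  intros Hold Hnew x y Hx Hy Nk. unfold pebble_key, upd in *.
  assert (Hm : forall u v, near arena (2 ^ k) u v -> near arena (2 ^ S k) u v)
    by (intros; eapply near_mono; [|eauto]; simpl; lia).
  destruct (Nat.eqb_spec x z), (Nat.eqb_spec y z); subst.
  - congruence.
  - destruct Hy as [->|Hy]; [congruence|].
    destruct (Hnew y Hy (fun E => Nk (eq_sym E))) as [N1 N2]; auto.
  - destruct Hx as [->|Hx]; [congruence|].
    destruct (Hnew x Hx Nk) as [N1 N2].
    split; intro Hn; [apply N1|apply N2]; apply near_sym; auto.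
  - destruct Hx as [->|Hx]; [congruence|]. destruct Hy as [->|Hy]; [congruence|].
    destruct (Hold x y Hx Hy Nk) as [N1 N2]. split; intro Hn; [apply N1|apply N2]; auto.
Qed.

Lemma pebbling_step {H H' k L g g'} z {a b} :
  pebbling H (S k) L g g' -> matching grade depth M M' w w' H' -> incl H H' ->
  length H' <= length H + 2 ^ q ->
  tree_pebble H' k a b \/ snd a = snd b -> far_from k L g g' a b ->
  pebbling H' k (z :: L) (upd g z a) (upd g' z b).
Proof.
  intros P Hm' Hinc Hl' Hab Hfar.
  pose proof (pebbling_budget P) as Hb. pose proof (pebbling_vars P). simpl in Hb.
  split; simpl; auto; try lia.
  - intros x Hx. unfold upd. destruct (Nat.eqb_spec x z); auto.
    destruct Hx as [->|Hx]; [congruence|].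
    destruct (pebbling_placed P Hx); eauto using tree_pebble_mono.
  - apply separated_upd; auto. intros x y Hx Hy; apply (pebbling_separated P Hx Hy).
Qed.

Lemma far_from_near {H k L g g' y a b} :
  pebbling H (S k) L g g' -> In y L ->
  near arena (2 ^ k) (g y) a -> near arena (2 ^ k) (g' y) b ->
  component a = component (g y) -> component b = component (g' y) -> far_from k L g g' a b.
Proof.
  intros P Hy Ha Hb Ca Cb x Hx Nk. rewrite Ca, Cb in Nk.
  destruct (pebbling_separated P Hy Hx (fun E => Nk (eq_sym E))) as [N1 N2].
  replace (2 ^ S k) with (2 ^ k + 2 ^ k) in N1, N2 by (simpl; lia).
  split; intro Hn; [apply N1|apply N2]; eapply near_trans; eauto.
Qed.

Lemma pebbled_forth_tree H k L g g' z y a :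
  pebbling H (S k) L g g' -> In y L -> tree_pebble H (S k) (g y) (g' y) ->
  near arena (2 ^ k) (g y) a -> exists b, pebbled k (z :: L) (upd g z a) (upd g' z b).
Proof.
  intros P Hy [p [p' [Ha [Hb [Hin Hl]]]]] [m [Hm W]].
  pose proof (pebbling_matching P) as Hmat. pose proof (pebbling_budget P) as Hbud.
  pose proof (pow2_pos k). simpl in Hl, Hbud.
  assert (Hkq : 2 ^ k <= 2 ^ q) by lia.
  destruct (matching_follow_walk W Ha Hmat Hin)
    as [H' [py [py' [Hm' [Hinc [Hl' [Hay [Hiny [Hpy Wb]]]]]]]]];
    [unfold depth; lia|unfold grade in *; nia|].
  assert (Hdepth : forall r r', In (r, r') H' -> length r' <= depth)
    by (intros r r' Hr; rewrite <- (matching_length Hm' Hr); apply (matching_depth Hm' Hr)).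
  assert (Eb : g' y = right_at p').
  { eapply right_node_inj; [exact Hb|apply right_node_at, (Hdepth p), Hinc, Hin]. }
  exists (right_at py'), H'. apply (pebbling_step z P); auto; [nia| |].
  - left. exists py, py'. split; [auto|split; [apply right_node_at, (Hdepth py), Hiny|]].
    split; [auto|lia].
  - apply (far_from_near P Hy); [exists m; auto|rewrite Eb; exists m; auto| |].
    + rewrite (left_node_component Hay), (left_node_component Ha); auto.
    + rewrite (right_node_component Hb).
      apply (right_node_component (p := py')), right_node_at, (Hdepth py), Hiny.
Qed.

Lemma pebbled_forth_copy H k L g g' z y a :
  pebbling H (S k) L g g' -> In y L -> snd (g y) = snd (g' y) ->
  near arena (2 ^ k) (g y) a -> exists b, pebbled k (z :: L) (upd g z a) (upd g' z b).
Proof.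
  intros P Hy Fy Hn.
  destruct Hn as [m [Hm W]]. pose proof (arena_walk_inv W) as [Ef Wn].
  exists (fst (g' y), snd a), H. apply (pebbling_step z P); auto using incl_refl.
  - apply (pebbling_matching P).
  - lia.
  - apply (far_from_near P Hy).
    + exists m; auto.
    + exists m; split; auto. rewrite (surjective_pairing (g' y)) at 1. rewrite <- Fy.
      apply arena_walk_lift; auto.
    + symmetry; apply (near_component (n := 2 ^ k)); exists m; auto.
    + unfold component; simpl. f_equal.
      transitivity (is_left (snd (g y))); [symmetry; exact (tree_sum_walk_side Wn)|].
      f_equal; exact Fy.
Qed.

(** At most [q] pebbles are down, so one of the [q + 2] copies is unoccupied. *)
Lemma pebbled_forth_fresh {H k L g g'} z {a} :
  pebbling H (S k) L g g' -> (forall y, In y L -> ~ near arena (2 ^ k) (g y) a) ->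
  exists b, pebbled k (z :: L) (upd g z a) (upd g' z b).
Proof.
  intros P Hfar.
  destruct (exists_fresh_below (n := S ncopies) (map (fun x => proj1_sig (fst (g' x))) L))
    as [n [Hn Hnin]].
  { rewrite length_map. pose proof (pebbling_vars P). unfold ncopies; lia. }
  assert (Hok : (n <? S ncopies) = true) by (apply Nat.ltb_lt; auto).
  exists (exist _ n Hok : copy_index ncopies, snd a), H.
  apply (pebbling_step z P); auto using incl_refl.
  - apply (pebbling_matching P).
  - lia.
  - intros x Hx _. split.
    + intro Hn'. apply (Hfar x Hx), near_sym; auto.
    + intros [m [_ W]]. apply arena_walk_inv in W as [Ef _]. apply Hnin.
      apply in_map_iff. exists x; split; auto. rewrite <- Ef. reflexivity.
Qed.

Lemma pebbled_forth k L g g' z a : pebbled (S k) L g g' ->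
  exists b, pebbled k (z :: L) (upd g z a) (upd g' z b).
Proof.
  intros [H P].
  destruct (classic (exists y, In y L /\ near arena (2 ^ k) (g y) a)) as [[y [Hy Hn]]|Hno].
  - destruct (pebbling_placed P Hy).
    + eapply pebbled_forth_tree; eauto.
    + eapply pebbled_forth_copy; eauto.
  - apply (pebbled_forth_fresh z P). intros y Hy Hn; apply Hno; eauto.
Qed.

End Arena.

Section Symmetry.
Context {I J : Type}.

Definition swap_side {K : nat} {A B : kripke I J} (x : world (kripke_copies K (kripke_sum A B))) :
    world (kripke_copies K (kripke_sum B A)) :=
  (fst x, match snd x with inl a => inr a | inr b => inl b end).

Lemma swap_side_involutive K A B (x : world (kripke_copies K (kripke_sum A B))) :
  swap_side (swap_side x) = x.
Proof. destruct x as [c [a|b]]; reflexivity. Qed.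

Lemma swap_side_edge K A B i (x y : world (kripke_copies K (kripke_sum A B))) :
  edge _ i x y -> edge _ i (swap_side x) (swap_side y).
Proof. destruct x as [c [a|a]], y as [d [b|b]]; simpl; tauto. Qed.

Lemma swap_side_walk K A B (x y : world (kripke_copies K (kripke_sum A B))) m :
  walk _ x y m -> walk _ (swap_side x) (swap_side y) m.
Proof.
  induction 1; [constructor|]. econstructor; eauto.
  destruct H as [i [E|E]]; exists i; [left|right]; apply swap_side_edge; auto.
Qed.

Lemma swap_side_near K A B (x y : world (kripke_copies K (kripke_sum A B))) n :
  near _ n (swap_side x) (swap_side y) -> near _ n x y.
Proof.
  intros [m [Hm W]]. exists m; split; auto.
  apply swap_side_walk in W. rewrite !swap_side_involutive in W. auto.
Qed.

Lemma swap_side_component (M M' : kripke I J) w w' q (x : world (arena M M' w w' q)) :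
  component (swap_side x : world (arena M' M w' w q)) =
  (fst (component x), negb (snd (component x))).
Proof. destruct x as [c [a|a]]; reflexivity. Qed.

Lemma swap_side_left_node (M M' : kripke I J) w w' q (x : world (arena M M' w w' q)) p :
  left_node x p -> right_node (swap_side x : world (arena M' M w' w q)) p.
Proof.
  destruct x as [c [a|a]]; intros [E [b [Eb Pb]]]; inversion Eb; subst; split; auto.
  exists b; auto.
Qed.

Lemma swap_side_right_node (M M' : kripke I J) w w' q (x : world (arena M M' w w' q)) p :
  right_node x p -> left_node (swap_side x : world (arena M' M w' w q)) p.
Proof.
  destruct x as [c [a|a]]; intros [E [b [Eb Pb]]]; inversion Eb; subst; split; auto.
  exists b; auto.
Qed.

Lemma pebbling_swap (M M' : kripke I J) w w' q H k L g g' :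
  @pebbling I J M M' w w' q H k L g g' ->
  @pebbling I J M' M w' w q (map swap_pair H) k L
    (fun x => swap_side (g' x)) (fun x => swap_side (g x)).
Proof.
  intros P. split; try apply P.
  - apply matching_swap, (pebbling_matching P).
  - rewrite length_map; apply P.
  - intros x Hx. destruct (pebbling_placed P Hx) as [[p [p' [Ha [Hb [Hin Hl]]]]]|F].
    + left. exists p', p. split; [apply swap_side_right_node; auto|].
      split; [apply swap_side_left_node; auto|].
      split; [apply in_map_swap_pair; auto|].
      rewrite <- (matching_length (pebbling_matching P) Hin); auto.
    + right. destruct (g x) as [c1 s1], (g' x) as [c2 s2]; simpl in F |- *; subst; auto.
  - intros x y Hx Hy Nk. unfold pebble_key in Nk. rewrite !swap_side_component in Nk.
    assert (Nk' : pebble_key g g' x <> pebble_key g g' y).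
    { intro E; apply Nk.
      assert (E1 : component (g x) = component (g y)) by exact (f_equal fst E).
      assert (E2 : component (g' x) = component (g' y)) by exact (f_equal snd E).
      rewrite E1, E2; auto. }
    destruct (pebbling_separated P Hx Hy Nk') as [N1 N2].
    split; intro Hn; [apply N2|apply N1]; eapply swap_side_near; eauto.
Qed.

Lemma upd_compose {A B : Type} (f : A -> B) (g : nat -> A) z a :
  (fun x => f (upd g z a x)) = upd (fun x => f (g x)) z (f a).
Proof. apply functional_extensionality; intro x; unfold upd; destruct (Nat.eqb x z); auto. Qed.

Lemma pebbled_back_and_forth (M M' : kripke I J) w w' q :
  back_and_forth (arena M M' w w' q) (arena M M' w w' q) (@pebbled I J M M' w w' q).
Proof.
  intros k L g g' [H P]. split; [eapply pebbling_partial_iso; eauto|]. intros k' ->. split.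
  - intros z a; apply pebbled_forth; exists H; auto.
  - intros z b. apply pebbling_swap in P.
    destruct (pebbled_forth z (swap_side b) (ex_intro _ _ P)) as [a [H' P']].
    exists (swap_side a), (map swap_pair H').
    apply pebbling_swap in P'. rewrite !upd_compose, !swap_side_involutive in P'.
    replace (fun x => swap_side (swap_side (g x))) with g in P'
      by (apply functional_extensionality; intro; rewrite swap_side_involutive; auto).
    replace (fun x => swap_side (swap_side (g' x))) with g' in P'
      by (apply functional_extensionality; intro; rewrite swap_side_involutive; auto).
    exact P'.
Qed.

End Symmetry.

Lemma matching_root_pair {I J} c ell (M M' : kripke I J) w w' :
  II_wins c ell M M' w w' -> matching c ell M M' w w' [([], [])].
Proof.
  intros Hw. split; simpl.
  - left; auto.
  - intros p p1 p2 [E1|[]] [E2|[]]; congruence.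
  - intros p1 p2 p' [E1|[]] [E2|[]]; congruence.
  - intros p i u p' [E|[]]; apply (f_equal fst) in E; exfalso; eapply app_cons_not_nil; eauto.
  - intros p p' i u' [E|[]]; apply (f_equal snd) in E; exfalso; eapply app_cons_not_nil; eauto.
  - intros p p' [E|[]]; inversion E; auto.
  - intros p p' [E|[]]; inversion E; simpl; lia.
  - intros p p' [E|[]]; inversion E; simpl; auto.
  - intros p p' [E|[]]; inversion E; simpl; auto.
  - intros p p' [E|[]]; inversion E; simpl. rewrite Nat.sub_0_r; auto.
Qed.

Section Roots.
Context {I J : Type} (M M' : kripke I J) (w : world M) (w' : world M') (q : nat).

Definition left_root : world (arena M M' w w' q) :=
  (copy0 (ncopies q), inl (unravel_root (depth q) M w)).
Definition right_root : world (arena M M' w w' q) :=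
  (copy0 (ncopies q), inr (unravel_root (depth q) M' w')).

Lemma pebbling_roots : II_wins (grade q) (depth q) M M' w w' ->
  pebbling [([], [])] q [0] (fun _ => left_root) (fun _ => right_root).
Proof.
  intros Hw. split; simpl; try lia.
  - apply matching_root_pair; auto.
  - unfold grade; lia.
  - intros x [<-|[]]. left. exists [], [].
    split; [split; [reflexivity|eexists; split; reflexivity]|].
    split; [split; [reflexivity|eexists; split; reflexivity]|].
    split; [left; auto|simpl; lia].
  - intros x y [<-|[]] [<-|[]] N. congruence.
Qed.

Lemma bisimilar_left_root : bisimilar M w (arena M M' w w' q) left_root.
Proof.
  eapply bisimilar_trans; [apply (bisimilar_unravel (depth q))|].
  eapply bisimilar_trans; [apply bisimilar_inl|]. apply bisimilar_copy.
Qed.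

Lemma bisimilar_right_root : bisimilar M' w' (arena M M' w w' q) right_root.
Proof.
  eapply bisimilar_trans; [apply (bisimilar_unravel (depth q))|].
  eapply bisimilar_trans; [apply bisimilar_inr|]. apply bisimilar_copy.
Qed.

Lemma arena_finite : finite_type I -> finite_kripke M -> finite_kripke M' ->
  finite_kripke (arena M M' w w' q).
Proof.
  intros HI HM HM'. apply finite_prod; [apply copy_index_finite|].
  apply finite_sum; apply unravel_finite; auto.
Qed.

Lemma game_equiv_sat_iff (phi : fo I J) :
  one_free_var phi -> qrank phi = q -> game_equiv (grade q) (depth q) M w M' w' ->
  (holds_at (arena M M' w w' q) left_root phi <-> holds_at (arena M M' w w' q) right_root phi).
Proof.
  intros Hfv Hq Hg. unfold holds_at.
  eapply back_and_forth_sat_iff;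
    [apply pebbled_back_and_forth|exists [([], [])]; apply pebbling_roots, Hg| |lia].
  eapply fv_in_mono; [|exact Hfv]. intros y ->; left; auto.
Qed.

End Roots.

Lemma invariant_game_of_bisim {I J} (K : kripke I J -> Prop) (phi : fo I J) q :
  one_free_var phi -> qrank phi = q ->
  (forall M M' w w', K M -> K M' -> K (arena M M' w w' q)) ->
  invariant_bisim K phi -> invariant_game K (grade q) (2 ^ q - 1) phi.
Proof.
  intros Hfv Hq HK Hinv M M' w w' KM KM' Hg.
  rewrite (Hinv M _ w _ KM (HK _ _ w w' KM KM') (bisimilar_left_root M M' w w' q)).
  rewrite (@game_equiv_sat_iff I J M M' w w' q phi Hfv Hq Hg).
  symmetry; apply (Hinv M' _ w' _ KM' (HK _ _ w w' KM KM') (bisimilar_right_root M M' w w' q)).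
Qed.

Theorem mainTheorem9 (I J : Type) (HI : finite_type I) (HJ : finite_type J)
  (phi : fo I J) (q : nat) (Hfv : one_free_var phi) (Hq : qrank phi = q) :
  (invariant_bisim (fun _ => True) phi ->
     exists c : nat, invariant_game (fun _ => True) c (2 ^ q - 1) phi) /\
  (invariant_bisim (@finite_kripke I J) phi ->
     exists c : nat, invariant_game (@finite_kripke I J) c (2 ^ q - 1) phi).
Proof.
  split; intros Hinv; exists (grade q); apply invariant_game_of_bisim; auto.
  intros M M' w w' HM HM'. apply arena_finite; auto.
Qed.
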